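(* For all integers $0\le a\le b$, $\mathrm{Incr}(\zeta(a,b))=\zeta(a,b+1)$; that is, applying $\mathrm{Incr}$ to the $\zeta$-decomposition of $B(a,b)$ yields a list of bucket structures whose buckets are exactly those of the $\zeta$-decomposition of $B(a,b+1)$, each carrying uniformly distributed random samples of its bucket, with all samples mutually independent.
   Context: Let $p_0,p_1,\dots$ be a stream. For integers $x<y$, the bucket $B(x,y)=\{p_i: x\le i\le y-1\}$. A bucket structure $BS(x,y)$ stores $p_x$, $x$, $y$, the timestamp of $p_x$, and two random samples $R_{x,y},Q_{x,y}$, each uniformly distributed on $B(x,y)$, together with the indices of the sampled elements. Logarithms are base 2. The $\zeta$-decomposition is the ordered list of bucket structures (with all samples mutually independent) defined by $\zeta(b,b)=\langle BS(b,b+1)\rangle$ and, for $a<b$, $\zeta(a,b)=\langle BS(a,c),\zeta(c,b)\rangle$ where $c=a+2^{\lfloor\log(b+1-a)\rfloor-1}$. Given the new element $p_{b+1}$, the operator $\mathrm{Incr}$ is defined by $\mathrm{Incr}(\zeta(b,b))=\langle BS(b,b+1),BS(b+1,b+2)\rangle$ (the new structure with fresh independent samples), and for $a<b$, $\mathrm{Incr}(\zeta(a,b))=\langle BS(a,v),\mathrm{Incr}(\zeta(v,b))\rangle$, where: if $\lfloor\log(b+2-a)\rfloor=\lfloor\log(b+1-a)\rfloor$ then $v=c$ and $BS(a,c)$ (the first structure of $\zeta(a,b)$) is kept unchanged; otherwise, letting $BS(a,c),BS(c,d)$ be the first two structures of $\zeta(a,b)$, $v=d$ and $BS(a,d)$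 is formed by merging them: $R_{a,d}$ equals $R_{a,c}$ with probability $1/2$ and $R_{c,d}$ otherwise (using a fresh independent coin), and likewise for $Q_{a,d}$ with an independent coin. *)

From mathcomp Require Import all_boot all_order all_algebra.
Set Implicit Arguments. Unset Strict Implicit. Unset Printing Implicit Defensive.
Import GRing.Theory Num.Theory.
Local Open Scope ring_scope.

Definition dist (T : Type) := seq (rat * T).

Definition dret (T : Type) (x : T) : dist T := [:: (1, x)].

Definition dbind (T U : Type) (d : dist T) (f : T -> dist U) : dist U :=
  flatten [seq [seq (p.1 * q.1, q.2) | q <- f p.2] | p <- d].

Definition prob (T : eqType) (d : dist T) (v : T) : rat :=
  \sum_(p <- d | p.2 == v) p.1.

(* Uniform distribution on the index set {x, ..., y-1} (bucket B(x,y)). *)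
Definition unif (x y : nat) : dist nat :=
  [seq (((y - x)%N%:R)^-1, i) | i <- iota x (y - x)].

Definition coin : dist bool := [:: (1/2, true); (1/2, false)].

Definition flog (n : nat) : nat := trunc_log 2 n.

(* A bucket structure BS(x,y) is represented by (x, y, iR, iQ) where iR, iQ
   are the indices of the sampled elements R_{x,y}, Q_{x,y}.  The stored
   element p_x, its timestamp and the sampled elements p_iR, p_iQ are
   functions of these indices, so they carry no extra randomness. *)
Definition BS := (nat * nat * nat * nat)%type.
Definition bs_x (s : BS) : nat := s.1.1.1.
Definition bs_y (s : BS) : nat := s.1.1.2.
Definition bs_R (s : BS) : nat := s.1.2.
Definition bs_Q (s : BS) : nat := s.2.

Definition zeta_split (a b : nat) : nat := (a + 2 ^ (flog (b.+1 - a)).-1)%N.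

Fixpoint zeta_bounds_fuel (n a b : nat) : seq (nat * nat) :=
  match n with
  | 0 => [:: (b, b.+1)]
  | n'.+1 => if (a < b)%N then (a, zeta_split a b) :: zeta_bounds_fuel n' (zeta_split a b) b
             else [:: (b, b.+1)]
  end.

Definition zeta_bounds (a b : nat) : seq (nat * nat) := zeta_bounds_fuel (b - a) a b.

Definition rand_bs (x y : nat) : dist BS :=
  dbind (unif x y) (fun r => dbind (unif x y) (fun q => dret (x, y, r, q))).

Fixpoint rand_bs_list (l : seq (nat * nat)) : dist (seq BS) :=
  match l with
  | [::] => dret [::]
  | xy :: l' => dbind (rand_bs xy.1 xy.2)
                  (fun s => dbind (rand_bs_list l') (fun t => dret (s :: t)))
  end.

Definition zeta (a b : nat) : dist (seq BS) := rand_bs_list (zeta_bounds a b).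

(* The operator Incr, applied to a list of bucket structures (the
   zeta-decomposition of B(a,b), a = x-coordinate of its first structure),
   given the new element p_{b+1}. *)
Fixpoint incr (b : nat) (l : seq BS) : dist (seq BS) :=
  match l with
  | [::] => dret [::]
  | [:: s] => dbind (rand_bs b.+1 b.+2) (fun s' => dret [:: s; s'])
  | s1 :: ((s2 :: rest2) as rest) =>
      let a := bs_x s1 in
      if flog (b.+2 - a) == flog (b.+1 - a) then
        dbind (incr b rest) (fun t => dret (s1 :: t))
      else
        dbind coin (fun cR => dbind coin (fun cQ =>
          let m := (a, bs_y s2,
                    (if cR then bs_R s1 else bs_R s2),
                    (if cQ then bs_Q s1 else bs_Q s2)) in
          dbind (incr b rest2) (fun t => dret (m :: t))))
  end.

(* Compare the two laws through the expectations of arbitrary test functions,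
   by induction on b - a.  If floor(log(b+2-a)) = floor(log(b+1-a)), the first
   bucket of zeta(a,b) is also the first bucket of zeta(a,b+1) and Incr simply
   recurses.  Otherwise b+2-a = 4m is a power of two: zeta(a,b) starts with
   B(a,a+m), B(a+m,a+2m) and zeta(a,b+1) with B(a,a+2m).  Choosing with a fair
   coin between independent uniform samples of two halves of equal size gives
   a uniform sample of their union, so the merged structure has the law of a
   fresh BS(a,a+2m), independent of the remaining structures. *)

From mathcomp Require Import all_boot all_order all_algebra.
From mathcomp Require Import zify ring.
Set Implicit Arguments. Unset Strict Implicit. Unset Printing Implicit Defensive.
Import GRing.Theory Num.Theory.
Local Open Scope ring_scope.

Definition expect (T : Type) (d : dist T) (F : T -> rat) : rat :=
  \sum_(p <- d) p.1 * F p.2.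

Definition total_mass (T : Type) (d : dist T) : rat := \sum_(p <- d) p.1.

Section Expectation.

Variables T U : Type.

Lemma eq_expect (d : dist T) (F G : T -> rat) :
  (forall x, F x = G x) -> expect d F = expect d G.
Proof. by move=> FG; apply: eq_bigr => p _; rewrite FG. Qed.

Lemma expect_ret (x : T) F : expect (dret x) F = F x.
Proof. by rewrite /expect big_seq1 mul1r. Qed.

Lemma expect_bind (d : dist T) (f : T -> dist U) F :
  expect (dbind d f) F = expect d (fun x => expect (f x) F).
Proof.
rewrite /expect big_flatten big_map; apply: eq_bigr => p _.
by rewrite big_map big_distrr; apply: eq_bigr => q _ /=; rewrite mulrA.
Qed.

Lemma exchange_expect (d1 : dist T) (d2 : dist U) (F : T -> U -> rat) :
  expect d1 (fun x => expect d2 (F x)) = expect d2 (fun y => expect d1 (F^~ y)).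
Proof.
rewrite /expect; under eq_bigr do rewrite big_distrr.
rewrite exchange_big; apply: eq_bigr => q _; rewrite big_distrr.
by apply: eq_bigr => p _ /=; rewrite mulrCA.
Qed.

Lemma expectD (d : dist T) F G :
  expect d (fun x => F x + G x) = expect d F + expect d G.
Proof. by rewrite /expect -big_split; apply: eq_bigr => p _; rewrite mulrDr. Qed.

Lemma expectZ (d : dist T) k F : expect d (fun x => k * F x) = k * expect d F.
Proof. by rewrite /expect big_distrr; apply: eq_bigr => p _; rewrite mulrCA. Qed.

Lemma expect_cst (d : dist T) k : expect d (fun=> k) = k * total_mass d.
Proof. by rewrite /expect big_distrr; apply: eq_bigr => p _; rewrite mulrC. Qed.

Lemma expect_coin (F : bool -> rat) : expect coin F = 1/2 * F true + 1/2 * F false.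
Proof. by rewrite /expect !big_cons big_nil addr0. Qed.

Lemma expect_coin_choice (d1 d2 : dist T) F :
  total_mass d1 = 1 -> total_mass d2 = 1 ->
  expect d1 (fun x1 => expect d2 (fun x2 => expect coin (fun c => F (if c then x1 else x2))))
  = 1/2 * expect d1 F + 1/2 * expect d2 F.
Proof.
move=> mass1 mass2.
under eq_expect do under eq_expect do rewrite expect_coin.
under eq_expect do rewrite expectD expectZ expect_cst mass2 mulr1 expectZ.
by rewrite expectD expectZ expectZ expect_cst mass1 mulr1.
Qed.

End Expectation.

Lemma prob_expect (T : eqType) (d : dist T) v : prob d v = expect d (fun x => (x == v)%:R).
Proof.
rewrite /prob /expect big_mkcond; apply: eq_bigr => p _.
by case: eqP; rewrite ?mulr1 ?mulr0.
Qed.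

Lemma expect_unif x y F :
  expect (unif x y) F = (y - x)%N%:R^-1 * \sum_(x <= i < y) F i.
Proof. by rewrite /expect /unif big_map big_distrr. Qed.

Lemma total_mass_unif x y : (x < y)%N -> total_mass (unif x y) = 1.
Proof.
move=> lt_xy; rewrite -[total_mass _]mul1r -expect_cst expect_unif sumr_const_nat.
by rewrite -[1 *+ _]mulr_natl mulr1 mulVf // pnatr_eq0 -lt0n subn_gt0.
Qed.

Lemma expect_unif_halves a m F : (0 < m)%N ->
  expect (unif a (a + m + m)) F
  = 1/2 * expect (unif a (a + m)) F + 1/2 * expect (unif (a + m) (a + m + m)) F.
Proof.
move=> m_gt0; rewrite !expect_unif (@big_cat_nat _ _ _ (a + m)) ?leq_addr //=.
have -> : (a + m + m - a = m + m)%N by lia.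
have -> : (a + m + m - (a + m) = m)%N by lia.
have -> : (a + m - a = m)%N by lia.
move: (\sum_(a <= i < a + m) F i) (\sum_(a + m <= i < a + m + m) F i) => S1 S2.
have m_neq0 : (m%:R : rat) != 0 by rewrite pnatr_eq0 -lt0n.
by rewrite natrD; field; rewrite m_neq0 -mulr2n mulrn_eq0 m_neq0.
Qed.

Lemma expect_unif_choice a m F : (0 < m)%N ->
  expect (unif a (a + m)) (fun r1 => expect (unif (a + m) (a + m + m)) (fun r2 =>
    expect coin (fun c => F (if c then r1 else r2))))
  = expect (unif a (a + m + m)) F.
Proof.
move=> m_gt0; rewrite expect_unif_halves // expect_coin_choice //;
  apply: total_mass_unif; lia.
Qed.

Lemma expect_rand_bs x y F :
  expect (rand_bs x y) F
  = expect (unif x y) (fun r => expect (unif x y) (fun q => F (x, y, r, q))).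
Proof.
rewrite /rand_bs expect_bind; apply: eq_expect => r.
by rewrite expect_bind; apply: eq_expect => q; rewrite expect_ret.
Qed.

Lemma eq_expect_rand_bs x y F G :
  (forall r q, F (x, y, r, q) = G (x, y, r, q)) ->
  expect (rand_bs x y) F = expect (rand_bs x y) G.
Proof.
by move=> FG; rewrite !expect_rand_bs; apply: eq_expect => r; apply: eq_expect.
Qed.

Definition merge_bs (cR cQ : bool) (s1 s2 : BS) : BS :=
  (bs_x s1, bs_y s2, if cR then bs_R s1 else bs_R s2, if cQ then bs_Q s1 else bs_Q s2).

Lemma expect_merge_bs a m F : (0 < m)%N ->
  expect (rand_bs a (a + m)) (fun s1 => expect (rand_bs (a + m) (a + m + m)) (fun s2 =>
    expect coin (fun cR => expect coin (fun cQ => F (merge_bs cR cQ s1 s2)))))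
  = expect (rand_bs a (a + m + m)) F.
Proof.
move=> m_gt0; rewrite [RHS]expect_rand_bs -expect_unif_choice //.
rewrite expect_rand_bs; apply: eq_expect => r1.
under eq_expect do rewrite expect_rand_bs.
rewrite exchange_expect; apply: eq_expect => r2.
under eq_expect do rewrite exchange_expect.
rewrite exchange_expect; apply: eq_expect => cR.
by rewrite -expect_unif_choice.
Qed.

Lemma flogS_neq n : (0 < n)%N -> flog n.+1 != flog n -> n.+1 = (2 ^ flog n.+1)%N.
Proof.
move=> n_gt0 neq; apply/eqP; rewrite eqn_leq trunc_logP //=.
have lt_flog : (flog n < flog n.+1)%N by rewrite ltn_neqAle eq_sym neq leq_trunc_log.
rewrite andbT; apply: leq_trans (@trunc_log_ltn 2 n isT) _.
by rewrite leq_exp2l.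
Qed.

Lemma zeta_split_gt a b : (a < zeta_split a b)%N.
Proof. by rewrite /zeta_split -addn1 leq_add2l expn_gt0. Qed.

Lemma zeta_split_le a b : (a < b)%N -> (zeta_split a b <= b)%N.
Proof.
move=> lt_ab; rewrite /zeta_split /flog.
have := @trunc_logP 2 (b.+1 - a) isT (ltac:(lia)).
have : (0 < trunc_log 2 (b.+1 - a))%N by rewrite trunc_log_gt0 /=; lia.
case: (trunc_log _ _) => [//|k] _; rewrite expnS /=; have := expn_gt0 2 k; lia.
Qed.

Lemma zeta_split_eq a b j :
  (2 ^ j.+1 <= b.+1 - a < 2 ^ j.+2)%N -> zeta_split a b = (a + 2 ^ j)%N.
Proof. by move=> /trunc_log_eq; rewrite /zeta_split /flog => ->. Qed.

Lemma zeta_bounds_fuel_eq n n' a b : (b - a <= n)%N -> (b - a <= n')%N ->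
  zeta_bounds_fuel n a b = zeta_bounds_fuel n' a b.
Proof.
elim: n n' a => [|n IH] [|n'] a //= le_n le_n'; case: ifP => //; try lia.
by move=> lt_ab; congr cons; apply: IH; have := zeta_split_gt a b; lia.
Qed.

Lemma zeta_bounds_cons a b : (a < b)%N ->
  zeta_bounds a b = (a, zeta_split a b) :: zeta_bounds (zeta_split a b) b.
Proof.
move=> lt_ab; rewrite {1}/zeta_bounds -(@prednK (b - a) ltac:(by rewrite subn_gt0)) /= lt_ab.
by congr cons; apply: zeta_bounds_fuel_eq; have := zeta_split_gt a b; lia.
Qed.

Lemma zeta_bounds_nil_free a b : zeta_bounds a b != [::].
Proof. by rewrite /zeta_bounds; case: (b - a)%N => //= n; case: ifP. Qed.

Lemma zeta_boundsnn b : zeta_bounds b b = [:: (b, b.+1)].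
Proof. by rewrite /zeta_bounds subnn. Qed.

Lemma zeta_bounds_nS b : zeta_bounds b b.+1 = [:: (b, b.+1); (b.+1, b.+2)].
Proof.
rewrite zeta_bounds_cons // (@zeta_split_eq _ _ 0) ?addn1 ?zeta_boundsnn //.
by rewrite subSn // subSnn.
Qed.

Lemma zeta_split_merge a b : (a < b)%N -> flog (b.+2 - a) != flog (b.+1 - a) ->
  exists2 m, (0 < m)%N & [/\ zeta_split a b = (a + m)%N,
    zeta_split (a + m) b = (a + m + m)%N, zeta_split a b.+1 = (a + m + m)%N
    & (a + m + m <= b)%N].
Proof.
move=> lt_ab; have -> : (b.+2 - a = (b.+1 - a).+1)%N by lia.
move=> /flogS_neq; case: (flog _) => [|[|j]] /=; rewrite ?expnS; try lia.
move=> pow; exists (2 ^ j)%N; first exact: expn_gt0.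
have := expn_gt0 2 j; set m := (2 ^ j)%N => /= m_gt0.
have {}pow : (b.+1 - a = 4 * m - 1)%N by lia.
rewrite (@zeta_split_eq a b j) ?(@zeta_split_eq (a + m) b j)
  ?(@zeta_split_eq a b.+1 j.+1) ?expnS -/m; try split; lia.
Qed.

Lemma expect_rand_bs_list_cons xy l F :
  expect (rand_bs_list (xy :: l)) F
  = expect (rand_bs xy.1 xy.2) (fun s => expect (rand_bs_list l) (fun t => F (s :: t))).
Proof.
rewrite /= expect_bind; apply: eq_expect => s.
by rewrite expect_bind; apply: eq_expect => t; rewrite expect_ret.
Qed.

Lemma expect_zeta_cons a b F : (a < b)%N ->
  expect (zeta a b) F = expect (rand_bs a (zeta_split a b))
    (fun s => expect (zeta (zeta_split a b) b) (fun t => F (s :: t))).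
Proof. by move=> lt_ab; rewrite /zeta zeta_bounds_cons // expect_rand_bs_list_cons. Qed.

Lemma eq_expect_zeta a b F G : (forall s t, F (s :: t) = G (s :: t)) ->
  expect (zeta a b) F = expect (zeta a b) G.
Proof.
rewrite /zeta; case: (zeta_bounds a b) (zeta_bounds_nil_free a b) => // xy l _ FG.
by rewrite !expect_rand_bs_list_cons; apply: eq_expect => s; apply: eq_expect.
Qed.

Lemma expect_incr_keep b s1 s2 t F :
  flog (b.+2 - bs_x s1) = flog (b.+1 - bs_x s1) ->
  expect (incr b [:: s1, s2 & t]) F = expect (incr b (s2 :: t)) (fun u => F (s1 :: u)).
Proof.
move=> /eqP keep; rewrite [incr _ _]/= keep expect_bind.
by apply: eq_expect => u; rewrite expect_ret.
Qed.

Lemma expect_incr_merge b s1 s2 t F :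
  flog (b.+2 - bs_x s1) != flog (b.+1 - bs_x s1) ->
  expect (incr b [:: s1, s2 & t]) F = expect coin (fun cR => expect coin (fun cQ =>
    expect (incr b t) (fun u => F (merge_bs cR cQ s1 s2 :: u)))).
Proof.
move=> merge; rewrite [incr _ _]/= (negbTE merge) expect_bind; apply: eq_expect => cR.
rewrite expect_bind; apply: eq_expect => cQ.
by rewrite expect_bind; apply: eq_expect => u; rewrite expect_ret.
Qed.

Lemma expect_incr_zeta_nn b F :
  expect (zeta b b) (fun l => expect (incr b l) F) = expect (zeta b b.+1) F.
Proof.
rewrite /zeta zeta_boundsnn zeta_bounds_nS !expect_rand_bs_list_cons.
apply: eq_expect => s; rewrite expect_ret expect_rand_bs_list_cons /= expect_bind.
by apply: eq_expect => s'; rewrite !expect_ret.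
Qed.

Lemma expect_incr_zeta a b F : (a <= b)%N ->
  expect (zeta a b) (fun l => expect (incr b l) F) = expect (zeta a b.+1) F.
Proof.
have [n] := ubnP (b - a); elim: n a F => // n IH a F lt_n le_ab.
case: (ltngtP a b) le_ab => // [lt_ab _|-> _]; last exact: expect_incr_zeta_nn.
have [keep|merge] := eqVneq (flog (b.+2 - a)) (flog (b.+1 - a)).
- have split_eq : zeta_split a b.+1 = zeta_split a b by rewrite /zeta_split keep.
  have split_gt := zeta_split_gt a b; have split_le := zeta_split_le lt_ab.
  rewrite expect_zeta_cons // [RHS]expect_zeta_cons ?split_eq; last lia.
  apply: eq_expect_rand_bs => r q; rewrite -IH; [|lia..].
  by apply: eq_expect_zeta => s t; rewrite expect_incr_keep.
have [m m_gt0 [split1 split2 split3 le_b]] := zeta_split_merge lt_ab merge.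
have IH_rest G := IH (a + m + m)%N G ltac:(lia) le_b.
rewrite [RHS]expect_zeta_cons ?split3 -?expect_merge_bs //; last lia.
rewrite expect_zeta_cons // split1; apply: eq_expect_rand_bs => r q.
rewrite expect_zeta_cons ?split2; last lia.
apply: eq_expect => s2; under eq_expect do rewrite expect_incr_merge //.
rewrite exchange_expect; apply: eq_expect => cR.
rewrite exchange_expect; apply: eq_expect => cQ.
exact: IH_rest.
Qed.

Theorem lemma4p1 (a b : nat) :
  (a <= b)%N ->
  forall v : seq BS,
    prob (dbind (zeta a b) (incr b)) v = prob (zeta a b.+1) v.
Proof. by move=> le_ab v; rewrite !prob_expect expect_bind expect_incr_zeta. Qed.
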